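(* Let $\beta\in(1,3/2]$. The restriction $\varphi'=\varphi|_Z:Z\to D$ is a bijection which is measurable with measurable inverse.
   Context: $\vec q_0=(0,0)$, $\vec q_1=(1,0)$, $\vec q_2=(0,1)$; $S_\beta$ is the attractor of the IFS $f_{\vec q_i}(\vec z)=(\vec z+\vec q_i)/\beta$ (for $1<\beta\le3/2$ the closed triangle with vertices $(0,0)$, $(\frac1{\beta-1},0)$, $(0,\frac1{\beta-1})$), with Borel $\sigma$-algebra. Subsets of $S_\beta$: $E_0=[0,\frac1\beta)\times[0,\frac1\beta)$; $E_1=\{0\le y<\frac1\beta,\ \frac{1}{\beta(\beta-1)}<x+y\le\frac{1}{\beta-1}\}$; $E_2=\{0\le x<\frac1\beta,\ \frac{1}{\beta(\beta-1)}<x+y\le\frac{1}{\beta-1}\}$; $C_{01}=\{x\ge\frac1\beta,\ 0\le y<\frac1\beta,\ x+y\le\frac{1}{\beta(\beta-1)}\}$; $C_{12}=\{x\ge\frac1\beta,\ y\ge\frac1\beta,\ \frac{1}{\beta(\beta-1)}<x+y\le\frac{1}{\beta-1}\}$; $C_{02}=\{0\le x<\frac1\beta,\ y\ge\frac1\beta,\ x+y\le\frac{1}{\beta(\beta-1)}\}$; $C_{012}=\{x\ge\frac1\beta,\ y\ge\frac1\beta,\ x+y\le\frac{1}{\beta(\beta-1)}\}$; $C=C_{01}\cup C_{12}\cup C_{02}$. $\Omega=\{0,1\}^{\mathbb N}$, $\Upsilon=\{0,1,2\}^{\mathbb N}$ with product $\sigma$-algebras and left shifts $\sigma,\sigma'$.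 $K_\beta$ on $\Omega\times\Upsilon\times S_\beta$: $K_\beta(\omega,\upsilon,\vec z)=(\omega,\upsilon,\beta\vec z-\vec q_i)$ if $\vec z\in E_i$; $(\sigma\omega,\upsilon,\beta\vec z-\vec q_i)$ if $\omega_1=0$, $\vec z\in C_{ij}$ ($ij\in\{01,12,02\}$); $(\sigma\omega,\upsilon,\beta\vec z-\vec q_j)$ if $\omega_1=1$, $\vec z\in C_{ij}$; $(\omega,\sigma'\upsilon,\beta\vec z-\vec q_i)$ if $\vec z\in C_{012}$, $\upsilon_1=i$. The digit $d_1(\omega,\upsilon,\vec z)$ is the vector subtracted, $d_n=d_1\circ K_\beta^{n-1}$. Define $\varphi:\Omega\times\Upsilon\times S_\beta\to\Upsilon$ by $\varphi(\omega,\upsilon,\vec z)=(b_1,b_2,\ldots)$ where $d_n(\omega,\upsilon,\vec z)=\vec q_{b_n}$. Let $Z$ be the set of $(\omega,\upsilon,\vec z)$ such that $K_\beta^n(\omega,\upsilon,\vec z)\in\Omega\times\Upsilon\times C$ for infinitely many $n$ and $K_\beta^n(\omega,\upsilon,\vec z)\in\Omega\times\Upsilon\times C_{012}$ for infinitely many $n$. Let $D$ be the set of $(b_1,b_2,\ldots)\in\Upsilon$ such that $\sum_{i\ge1}\vec q_{b_{j+i-1}}\beta^{-i}\in C$ for infinitely many $j$ and $\sum_{i\ge1}\vec q_{b_{j+i-1}}\beta^{-i}\in C_{012}$ for infinitely many $j$. (One has $\varphi(Z)=D$.) *)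

From HB Require Import structures.
From mathcomp Require Import all_boot all_order all_algebra.
From mathcomp Require Import all_classical all_reals all_analysis.
Set Implicit Arguments. Unset Strict Implicit. Unset Printing Implicit Defensive.
Import Order.TTheory GRing.Theory Num.Theory.
Import numFieldNormedType.Exports.
Local Open Scope classical_set_scope.
Local Open Scope ring_scope.

(* Omega = {0,1}^N  (false = 0, true = 1), Upsilon = {0,1,2}^N;
   sequences are indexed from 0, so omega_1 is [w 0O]. *)
Definition Omega := nat -> bool.
Definition Upsilon := nat -> 'I_3.

Definition state (R : realType) := (Omega * Upsilon * (R * R))%type.

Definition qv (R : realType) (i : 'I_3) : R * R :=
  match val i with 0%N => (0, 0) | 1%N => (1, 0) | _ => (0, 1) end.

Section Regions.
Variables (R : realType) (beta : R).

Definition Sbeta : set (R * R) :=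
  [set z | 0 <= z.1 /\ 0 <= z.2 /\ z.1 + z.2 <= (beta - 1)^-1].

Definition E0 : set (R * R) :=
  [set z | 0 <= z.1 < beta^-1 /\ 0 <= z.2 < beta^-1].
Definition E1 : set (R * R) :=
  [set z | 0 <= z.2 < beta^-1 /\
           (beta * (beta - 1))^-1 < z.1 + z.2 <= (beta - 1)^-1].
Definition E2 : set (R * R) :=
  [set z | 0 <= z.1 < beta^-1 /\
           (beta * (beta - 1))^-1 < z.1 + z.2 <= (beta - 1)^-1].
Definition C01 : set (R * R) :=
  [set z | beta^-1 <= z.1 /\ 0 <= z.2 < beta^-1 /\
           z.1 + z.2 <= (beta * (beta - 1))^-1].
Definition C12 : set (R * R) :=
  [set z | beta^-1 <= z.1 /\ beta^-1 <= z.2 /\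
           (beta * (beta - 1))^-1 < z.1 + z.2 <= (beta - 1)^-1].
Definition C02 : set (R * R) :=
  [set z | 0 <= z.1 < beta^-1 /\ beta^-1 <= z.2 /\
           z.1 + z.2 <= (beta * (beta - 1))^-1].
Definition C012 : set (R * R) :=
  [set z | beta^-1 <= z.1 /\ beta^-1 <= z.2 /\
           z.1 + z.2 <= (beta * (beta - 1))^-1].
Definition Cset : set (R * R) := C01 `|` C12 `|` C02.

Definition Tmap (i : 'I_3) (z : R * R) : R * R :=
  (beta * z.1 - (qv R i).1, beta * z.2 - (qv R i).2).

Definition shiftO (w : Omega) : Omega := fun n => w n.+1.
Definition shiftU (u : Upsilon) : Upsilon := fun n => u n.+1.

Definition i0 : 'I_3 := @Ordinal 3 0 isT.
Definition i1 : 'I_3 := @Ordinal 3 1 isT.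
Definition i2 : 'I_3 := @Ordinal 3 2 isT.

(* one step of K_beta: returns (index b of the digit d_1 = q_b, K_beta x).
   The last branch (points outside S_beta) is irrelevant junk. *)
Definition Kstep (x : state R) : 'I_3 * state R :=
  let: (w, u, z) := x in
  if `[< E0 z >] then (i0, (w, u, Tmap i0 z))
  else if `[< E1 z >] then (i1, (w, u, Tmap i1 z))
  else if `[< E2 z >] then (i2, (w, u, Tmap i2 z))
  else if `[< C01 z >] then
    (let b := if w 0%N then i1 else i0 in (b, (shiftO w, u, Tmap b z)))
  else if `[< C12 z >] then
    (let b := if w 0%N then i2 else i1 in (b, (shiftO w, u, Tmap b z)))
  else if `[< C02 z >] then
    (let b := if w 0%N then i2 else i0 in (b, (shiftO w, u, Tmap b z)))
  else if `[< C012 z >] then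
    (let b := u 0%N in (b, (w, shiftU u, Tmap b z)))
  else (i0, x).

Definition Kbeta (x : state R) : state R := (Kstep x).2.

Definition Kiter (n : nat) (x : state R) : state R := iter n Kbeta x.

(* phi(x) = (b_1, b_2, ...) with d_n(x) = q_{b_n}; index k here is b_{k+1} *)
Definition phi (x : state R) : Upsilon := fun k => (Kstep (Kiter k x)).1.

Definition inf_often (P : nat -> Prop) : Prop :=
  forall N : nat, exists2 n : nat, (N <= n)%N & P n.

Definition Zset : set (state R) :=
  [set x | Sbeta x.2 /\
           inf_often (fun n => Cset (Kiter n x).2) /\
           inf_often (fun n => C012 (Kiter n x).2)].

(* sum_{i>=1} q_{b_{j+i-1}} beta^{-i}, written 0-indexed:
   sum_{i>=0} q_{b (j+i)} beta^{-(i+1)}, coordinatewise *)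
Definition proj_seq (b : Upsilon) (j : nat) : R * R :=
  (limn (series (fun i => (qv R (b (j + i)%N)).1 * beta ^- i.+1)),
   limn (series (fun i => (qv R (b (j + i)%N)).2 * beta ^- i.+1))).

Definition Dset : set Upsilon :=
  [set b | inf_often (fun j => Cset (proj_seq b j)) /\
           inf_often (fun j => C012 (proj_seq b j))].

End Regions.

Definition seq_sigma (K : Type) : set (set (nat -> K)) :=
  <<s [set A | exists (n : nat) (k : K), A = [set w | w n = k]] >>.

Arguments seq_sigma K : clear implicits.

Definition borel2 (R : realType) : set (set (R * R)) :=
  <<s [set A : set (R * R) | open A] >>.

Arguments borel2 R : clear implicits.

(* product sigma-algebra on Omega x Upsilon x R^2; restricted (trace) to
   Omega x Upsilon x S_beta it is the product sigma-algebra there *)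
Definition state_sigma (R : realType) : set (set (state R)) :=
  <<s [set S | exists A B C, [/\ seq_sigma bool A, seq_sigma 'I_3 B,
                           borel2 R C & S = A `*` B `*` C]] >>.

Arguments state_sigma R : clear implicits.

(* measurability of f restricted to Dom (with trace sigma-algebra on Dom);
   the codomain carries the trace of FY on a set containing f(Dom), whose
   measurable sets are traces of FY-sets, so it suffices to test those. *)
Definition trace_measurable (X Y : Type) (FX : set (set X)) (FY : set (set Y))
    (Dom : set X) (f : X -> Y) : Prop :=
  forall B, FY B -> exists2 A, FX A & Dom `&` f @^-1` B = Dom `&` A.

(* Off the switch regions the digit of K_beta is forced by the position z; on a
   region C_ij it is the upper or lower of the two digits i, j according to the
   first letter of omega (which is then consumed), and on C_012 it is the first
   letter of upsilon.  Every admissible digit b keeps beta z - q_b in S_beta, and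
   a bounded orbit of the affine maps z |-> beta z - q_b is unique, so the space
   component of K^j x is the radix expansion pi_j(b) = sum_i q_(b_(j+i)) beta^-(i+1)
   of the digit sequence b = phi(x).  Hence x is recovered from b: the k-th letter
   of omega records whether b_j was the upper digit at the k-th time j with
   pi_j(b) in C, and the k-th letter of upsilon is b_j at the k-th time j with
   pi_j(b) in C_012.  On Z these times are infinitely many, so every letter is
   read.  phi is measurable because K_beta is a finite case split into continuous
   pieces over Borel regions; the inverse is measurable because pi_j is a uniform
   limit of functions of finitely many letters of b. *)

From mathcomp Require Import all_boot all_order all_algebra.
From mathcomp Require Import all_classical all_reals all_analysis.
From mathcomp Require Import ring lra zify.
Import Order.TTheory GRing.Theory Num.Theory.
Import numFieldNormedType.Exports.
Local Open Scope classical_set_scope.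
Local Open Scope ring_scope.

(** * Generated sigma-algebras *)

Section GeneratedSigmaAlgebra.
Context {T : Type} (G : set (set T)).
Local Notation S := <<s G >>.

Lemma salg0 : S set0. Proof. exact: sigma_algebra0. Qed.

Lemma salgC A : S A -> S (~` A).
Proof. by rewrite -setTD; exact: sigma_algebraCD. Qed.

Lemma salgT : S setT. Proof. by rewrite -[X in S X]setC0; apply: salgC; exact: salg0. Qed.

Lemma salg_bigcup (A : (set T)^nat) : (forall i, S (A i)) -> S (\bigcup_i A i).
Proof. exact: sigma_algebra_bigcup. Qed.

Lemma salg_bigcap (A : (set T)^nat) : (forall i, S (A i)) -> S (\bigcap_i A i).
Proof.
move=> SA; rewrite -[X in S X]setCK setC_bigcap.
by apply: salgC; apply: salg_bigcup => i; exact: salgC.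
Qed.

Lemma salgU A B : S A -> S B -> S (A `|` B).
Proof. by move=> SA SB; rewrite -bigcup2E; apply: salg_bigcup => -[|[|i]] //=; exact: salg0. Qed.

Lemma salgI A B : S A -> S B -> S (A `&` B).
Proof.
by move=> SA SB; rewrite -[X in S X]setCK setCI; apply: salgC; apply: salgU; exact: salgC.
Qed.

Lemma salg_cst (P : Prop) : S [set _ | P].
Proof.
have [p|np] := pselect P.
- by rewrite (_ : [set _ | P] = setT) ?predeqE //; exact: salgT.
- by rewrite (_ : [set _ | P] = set0) ?predeqE //; exact: salg0.
Qed.

Lemma salg_if (c : T -> bool) A B : S [set x | c x] -> S A -> S B ->
  S [set x | if c x then A x else B x].
Proof.
move=> Sc SA SB; rewrite (_ : [set x | _] = ([set x | c x] `&` A) `|` (~` [set x | c x] `&` B)).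
  by apply: salgU; apply: salgI => //; exact: salgC.
by apply/seteqP; split=> x /=; case: (c x) => /=; [left|right|case=> -[]|case=> -[]].
Qed.

End GeneratedSigmaAlgebra.

Lemma salg_preimage {X Y : Type} (GX : set (set X)) (GY : set (set Y)) (f : X -> Y) :
  (forall B, GY B -> <<s GX >> (f @^-1` B)) ->
  forall B, <<s GY >> B -> <<s GX >> (f @^-1` B).
Proof.
move=> fG; apply: smallest_sub => //; split => /=.
- by rewrite preimage_set0; exact: salg0.
- by move=> A SA; rewrite setTD preimage_setC; exact: salgC.
- by move=> A SA; rewrite preimage_bigcup; exact: salg_bigcup.
Qed.

Lemma seq_sigma_cyl (K : Type) n (k : K) : seq_sigma K [set b | b n = k].
Proof. by apply: sub_sigma_algebra; exists n, k. Qed.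

Lemma seq_sigma_finite_dep {K : countType} n (S : set (nat -> K)) :
  (forall b b', (forall i, (i < n)%N -> b i = b' i) -> S b -> S b') ->
  seq_sigma K S.
Proof.
elim: n S => [|n IH] S Sdep.
  rewrite (_ : S = [set _ | exists b, S b]); first exact: salg_cst.
  by apply/seteqP; split=> [b Sb|b [b' /Sdep]]; [exists b|apply].
pose Sk k := [set b | S (fun i => if i == n then k else b i)].
have SkS k : seq_sigma K (Sk k).
  by apply: IH => b b' bb'; apply: Sdep => i ltin; case: eqP => // /eqP ne; apply: bb'; lia.
rewrite (_ : S = \bigcup_i if unpickle i is Some k then [set b | b n = k] `&` Sk k else set0).
  apply: salg_bigcup => i; case: unpickle => [k|]; last exact: salg0.
  by apply: salgI; [exact: seq_sigma_cyl|exact: SkS].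
have fixn (b : nat -> K) : (fun i => if i == n then b n else b i) = b.
  by apply: funext => i; case: eqP => [->|].
apply/seteqP; split=> b.
- by move=> Sb; exists (pickle (b n)) => //; rewrite pickleK /Sk /= fixn.
- by case=> i _; case: unpickle => // k [<-]; rewrite /Sk /= fixn.
Qed.

Lemma preimage_open_unif_limit {R : realType} {M : pseudoMetricType R} {T : Type}
    {f : T -> M} {s : nat -> T -> M} {V : set M} :
  open V ->
  (forall e : R, 0 < e -> exists N, forall n t, (N <= n)%N -> ball (f t) e (s n t)) ->
  f @^-1` V = \bigcup_m \bigcup_N
               \bigcap_n [set t | ball (s (N + n)%N t) m.+1%:R^-1 `<=` V].
Proof.
rewrite openE => oV fs; apply/seteqP; split=> t /=.
- move=> /oV /nbhs_ballP [e /= e0 eV].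
  have e20 : 0 < e / 2 by rewrite divr_gt0.
  have [m me] : exists m, m.+1%:R^-1 < e / 2.
    exists (Num.truncn (e / 2)^-1); rewrite -[X in _ < X]invrK ltf_pV2 ?posrE ?invr_gt0 //.
    exact: truncnS_gt.
  have [N sN] := fs _ e20; exists m => //; exists N => // n _ q sq.
  apply: eV; apply: le_ball (ball_triangle (sN _ _ (leq_addr n N)) sq).
  by rewrite [leRHS]splitr lerD // ltW.
- case=> m _ [N _ NV].
  have [N' sN'] : exists N', forall n t, (N' <= n)%N -> ball (f t) m.+1%:R^-1 (s n t).
    by apply: fs; rewrite invr_gt0.
  by apply: (NV N' I); apply: ball_sym; apply: sN'; exact: leq_addl.
Qed.

(** * Visit counts *)

Section Visits.
Variable f : nat -> bool.

Definition visits (j : nat) : nat := count f (iota 0 j).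

Lemma visitsS j : visits j.+1 = (visits j + f j)%N.
Proof. by rewrite /visits -addn1 iotaD count_cat /= addn0. Qed.

Lemma visits_le {i j} : (i <= j)%N -> (visits i <= visits j)%N.
Proof. by move=> /subnKC <-; rewrite /visits iotaD count_cat leq_addr. Qed.

Lemma visits_inj {i j} : f i -> f j -> visits i = visits j -> i = j.
Proof.
move=> fi fj eij; case: (ltngtP i j) => [lt_ij|lt_ji|//].
- by have := visits_le lt_ij; rewrite visitsS fi eij; lia.
- by have := visits_le lt_ji; rewrite visitsS fj eij; lia.
Qed.

Lemma visits_onto : inf_often f -> forall k, exists2 j, f j & visits j = k.
Proof.
move=> fio k; have unb m : exists n, (m <= visits n)%N.
  elim: m => [|m [n lemn]]; first by exists 0%N.
  have [n' lenn' fn'] := fio n; exists n'.+1; rewrite visitsS fn'.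
  by have := visits_le lenn'; lia.
have [[|j] ltkj minj] := ex_minnP (unb k.+1); first by rewrite /visits /= in ltkj.
have lejk : (visits j <= k)%N by rewrite leqNgt; apply/negP => /minj; lia.
by exists j; move: ltkj lejk; rewrite visitsS; case: (f j) => /=; lia.
Qed.

(* The value of g at the k-th time f holds; if f holds fewer than k + 1 times,
   xget falls back to the junk value g 0. *)
Definition letter_at {K : Type} (g : nat -> K) (k : nat) : K :=
  g (xget 0%N [set j | f j /\ visits j = k]).

Lemma letter_at_visits {K} (g : nat -> K) j : f j -> letter_at g (visits j) = g j.
Proof.
by move=> fj; rewrite /letter_at (@xget_unique _ _ _ j) // => i [fi /visits_inj]; apply.
Qed.

End Visits.

Section VisitsMeasurable.
Context {T : Type} (G : set (set T)) (f : T -> nat -> bool).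
Local Notation S := <<s G >>.
Hypothesis Sf : forall j, S [set t | f t j].

Lemma salg_visits j k : S [set t | visits (f t) j = k].
Proof.
elim: j k => [|j IH] k; first by rewrite /visits /=; exact: salg_cst.
rewrite (_ : [set t | _] = [set t | if f t j then
    (if k is k'.+1 then visits (f t) j = k' else False) else visits (f t) j = k]).
  by apply: salg_if; [exact: Sf|case: k => [|k]; [exact: salg0|exact: IH]|exact: IH].
apply/seteqP; split=> t /=; rewrite visitsS; case: (f t j) => /=; rewrite ?addn0 //.
- by case: k => [|k]; lia.
- by case: k => [//|k]; lia.
Qed.

Lemma salg_letter_at {K : Type} (g : T -> nat -> K) k a :
  (forall j, S [set t | g t j = a]) -> S [set t | letter_at (f t) (g t) k = a].
Proof.
move=> Sg; pose V j := [set t | f t j] `&` [set t | visits (f t) j = k].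
have SV j : S (V j) by apply: salgI; [exact: Sf|exact: salg_visits].
rewrite (_ : [set t | _] = (\bigcup_j (V j `&` [set t | g t j = a])) `|`
                          ((~` \bigcup_j V j) `&` [set t | g t 0%N = a])).
  apply: salgU; first by apply: salg_bigcup => j; exact: salgI.
  by apply: salgI => //; apply: salgC; exact: salg_bigcup.
apply/seteqP; split=> t /=.
- have [[j [fj vj]]|nV] := pselect (exists j, V j t).
    by rewrite -vj letter_at_visits // => <-; left; exists j.
  rewrite /letter_at xgetPN => [<-|j [fj vj]]; last by apply: nV; exists j.
  by right; split => // -[j _ Vj]; apply: nV; exists j.
- case=> [[j _ [[fj vj] <-]]|[nV <-]]; first by rewrite -vj letter_at_visits.
  by rewrite /letter_at xgetPN // => j [fj vj]; apply: nV; exists j.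
Qed.

End VisitsMeasurable.

(** * Radix expansions *)

Definition radix {R : realType} (beta : R) (a : nat -> R) (j : nat) : R^nat :=
  series (fun i => a (j + i)%N * beta ^- i.+1).

Section RadixExpansion.
Context {R : realType} {beta : R} (beta_gt1 : 1 < beta).
Local Notation d := ((beta - 1)^-1).

Let beta_gt0 : 0 < beta. Proof. exact: lt_trans ltr01 beta_gt1. Qed.
Let beta_neq0 : beta != 0. Proof. by rewrite gt_eqF. Qed.
Let d_gt0 : 0 < d. Proof. by rewrite invr_gt0 subr_gt0. Qed.
Let expN_ge0 m : 0 <= beta ^- m. Proof. by rewrite invr_ge0 exprn_ge0 // ltW. Qed.

Lemma radix_dE : (1 + d) / beta = d.
Proof. by field; rewrite beta_neq0 subr_eq0 gt_eqF. Qed.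

Lemma expN_small {e} : 0 < e -> exists N, forall n, (N <= n)%N -> beta ^- n * d < e.
Proof.
move=> e0; have b1 : `|beta^-1| < 1 by rewrite ger0_norm ?invr_ge0 ?ltW // invf_lt1.
have [N _ hN] := cvgr0_norm_lt _ (cvg_expr b1) _ (divr_gt0 e0 d_gt0).
exists N => n /hN /=; rewrite ger0_norm ?exprn_ge0 ?invr_ge0 ?ltW //.
by rewrite exprVn ltr_pdivlMr.
Qed.

Context {a : nat -> R}.

Lemma radix0 j : radix beta a j 0 = 0. Proof. by rewrite /radix /series /= big_geq. Qed.

Lemma radixS j m : radix beta a j m.+1 = a j / beta + beta^-1 * radix beta a j.+1 m.
Proof.
rewrite /radix /series /= big_nat_recl // addn0 expr1 mulr_sumr; congr (_ + _).
by apply: eq_bigr => i _; rewrite addnS -addSn exprS invfM mulrCA.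
Qed.

Lemma radix_orbit (y : nat -> R) : (forall n, beta * y n - a n = y n.+1) ->
  forall m j, y j = radix beta a j m + beta ^- m * y (j + m)%N.
Proof.
move=> ya; elim=> [|m IH] j; first by rewrite radix0 expr0 invr1 mul1r addn0 add0r.
have -> : y j = a j / beta + beta^-1 * y j.+1 by rewrite -ya; field.
by rewrite (IH j.+1) radixS -addSnnS exprS invfM; ring.
Qed.

Section Digits01.
Hypothesis a01 : forall n, 0 <= a n <= 1.

Lemma radix_nd j : nondecreasing_seq (radix beta a j).
Proof.
apply/nondecreasing_seqP => n; rewrite /radix seriesSr lerDl mulr_ge0 //.
by case/andP: (a01 (j + n)).
Qed.

Lemma radix_ge0 j m : 0 <= radix beta a j m.
Proof. by rewrite -(radix0 j); exact: radix_nd. Qed.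

Lemma radix_le j m : radix beta a j m <= d.
Proof.
elim: m j => [|m IH] j; first by rewrite radix0 ltW.
have /andP [_ aj1] := a01 j.
rewrite radixS -radix_dE mulrDl mul1r.
have : beta^-1 * radix beta a j.+1 m <= beta^-1 * d.
  by apply: ler_wpM2l; [rewrite invr_ge0 ltW|exact: IH].
have : a j / beta <= 1 / beta by rewrite ler_pM2r ?invr_gt0.
lra.
Qed.

Lemma cvg_radix j : cvgn (radix beta a j).
Proof.
apply: nondecreasing_is_cvgn; first exact: radix_nd.
by exists d => _ [m _ <-]; exact: radix_le.
Qed.

Lemma lim_radixS j : beta * limn (radix beta a j) - a j = limn (radix beta a j.+1).
Proof.
have shift : (fun m => radix beta a j m.+1) @ \oo -->
    a j / beta + beta^-1 * limn (radix beta a j.+1).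
  under eq_fun do rewrite radixS.
  by apply: cvgD; [exact: cvg_cst|apply: cvgMl_tmp; exact: cvg_radix].
have shift' : (fun m => radix beta a j m.+1) @ \oo --> limn (radix beta a j).
  by rewrite cvg_shiftS; exact: cvg_radix.
by rewrite -(cvg_lim _ shift') // (cvg_lim _ shift) //; field.
Qed.

Lemma lim_radix_ge0 j : 0 <= limn (radix beta a j).
Proof. by apply: (limr_ge (cvg_radix j)); exists 0%N => // m _; exact: radix_ge0. Qed.

Lemma lim_radix_le j : limn (radix beta a j) <= d.
Proof.
by apply: (limr_le (cvg_radix j)); exists 0%N => // m _; exact: radix_le.
Qed.

Lemma lim_radix_tail j m :
  0 <= limn (radix beta a j) - radix beta a j m <= beta ^- m * d.
Proof.
rewrite (radix_orbit _ lim_radixS m j) addrAC subrr add0r.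
by rewrite mulr_ge0 ?lim_radix_ge0 //= ler_wpM2l ?lim_radix_le.
Qed.

End Digits01.

Lemma lim_radix_orbit (y : nat -> R) : (forall n, beta * y n - a n = y n.+1) ->
  (forall n, 0 <= y n <= d) -> forall j, limn (radix beta a j) = y j.
Proof.
move=> ya yd j; apply: cvg_lim => //; apply/cvgrPdist_lt => e e0.
have [N hN] := expN_small e0; exists N => // m /= leNm.
rewrite (radix_orbit _ ya m j) addrAC subrr add0r.
have /andP [y0 y1] := yd (j + m)%N.
rewrite ger0_norm ?mulr_ge0 //.
by apply: le_lt_trans (hN m leNm); rewrite ler_wpM2l.
Qed.

End RadixExpansion.

Lemma radixD {R : realType} (beta : R) (a a' : nat -> R) j m :
  radix beta a j m + radix beta a' j m = radix beta (fun n => a n + a' n) j m.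
Proof. by rewrite /radix /series /= -big_split; apply: eq_bigr => i _; rewrite mulrDl. Qed.

Lemma lim_radixD {R : realType} {beta : R} (beta_gt1 : 1 < beta) {a a' : nat -> R} :
  (forall n, 0 <= a n <= 1) -> (forall n, 0 <= a' n <= 1) -> forall j,
  limn (radix beta a j) + limn (radix beta a' j) = limn (radix beta (fun n => a n + a' n) j).
Proof.
move=> a01 a'01 j; rewrite -limD;
  [|exact (cvg_radix beta_gt1 a01 j)|exact (cvg_radix beta_gt1 a'01 j)].
by congr (lim (_ @ \oo)); apply: funext => m; exact: radixD.
Qed.

(** * The regions and one step of K_beta *)

Lemma ord3P (i : 'I_3) : [\/ i = i0, i = i1 | i = i2].
Proof.
by case: i => -[|[|[|m]]] lti //; [constructor 1|constructor 2|constructor 3]; exact: val_inj.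
Qed.

Section Cuts.
Context {R : realType} (beta : R).

Definition below1 (z : R * R) := beta * z.1 < 1.
Definition below2 (z : R * R) := beta * z.2 < 1.
Definition above12 (z : R * R) := (beta - 1)^-1 < beta * z.1 + beta * z.2.

Definition inC (z : R * R) := `[< Cset beta z >].
Definition inC012 (z : R * R) := `[< C012 beta z >].
Definition upper_digit (z : R * R) := if `[< C01 beta z >] then i1 else i2.
Definition lower_digit (z : R * R) := if `[< C12 beta z >] then i1 else i0.
Definition admissible (i : 'I_3) (z : R * R) :=
  [&& (i == i0) ==> ~~ above12 z, (i == i1) ==> ~~ below1 z & (i == i2) ==> ~~ below2 z].

End Cuts.

Section Regions.
Context {R : realType} {beta : R} (beta_range : 1 < beta <= 3 / 2).
Local Notation d := ((beta - 1)^-1).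

Let beta_gt1 : 1 < beta. Proof. by case/andP: beta_range. Qed.
Let beta_gt0 : 0 < beta. Proof. by rewrite (lt_trans ltr01). Qed.
Let beta_neq0 : beta != 0. Proof. by rewrite gt_eqF. Qed.
Let beta1_neq0 : beta - 1 != 0. Proof. by rewrite subr_eq0 gt_eqF. Qed.

Lemma SbetaE z : Sbeta beta z <->
  [/\ 0 <= beta * z.1, 0 <= beta * z.2 & beta * z.1 + beta * z.2 <= 1 + d].
Proof.
rewrite /Sbeta /= -(ler_pM2l beta_gt0 0 z.1) -(ler_pM2l beta_gt0 0 z.2).
rewrite -(ler_pM2l beta_gt0 _ d) !mulr0 mulrDr.
have -> : beta * d = 1 + d by field.
by split=> [[? [? ?]]|[? ? ?]].
Qed.

(* The only use of beta <= 3/2: the three cuts together would force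
   1/(beta - 1) < 2.  Hence E0, E1 and E2 are pairwise disjoint. *)
Lemma not_all_cuts z : ~~ [&& below1 beta z, below2 beta z & above12 beta z].
Proof.
apply/negP => /and3P []; rewrite /below1 /below2 /above12 => z1 z2 z12.
suff : 2 <= d by lra.
have : d * (beta - 1) = 1 by rewrite mulVf.
have : 0 < d by rewrite invr_gt0 subr_gt0.
by case/andP: beta_range; nra.
Qed.

Section RegionsAsCuts.
Context {z : R * R} (Sz : Sbeta beta z).

Let lt1E : (z.1 < beta^-1) = below1 beta z.
Proof. by rewrite /below1 -(ltr_pM2l beta_gt0) mulfV. Qed.
Let lt2E : (z.2 < beta^-1) = below2 beta z.
Proof. by rewrite /below2 -(ltr_pM2l beta_gt0) mulfV. Qed.
Let gt12E : ((beta * (beta - 1))^-1 < z.1 + z.2) = above12 beta z.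
Proof.
rewrite /above12 -mulrDr.
have -> : d = beta * (beta * (beta - 1))^-1 by rewrite invfM mulrA mulfV // mul1r.
by rewrite ltr_pM2l.
Qed.
Let ge1E : (beta^-1 <= z.1) = ~~ below1 beta z. Proof. by rewrite leNgt lt1E. Qed.
Let ge2E : (beta^-1 <= z.2) = ~~ below2 beta z. Proof. by rewrite leNgt lt2E. Qed.
Let le12E : (z.1 + z.2 <= (beta * (beta - 1))^-1) = ~~ above12 beta z.
Proof. by rewrite leNgt gt12E. Qed.
Let z1_ge0 : (0 <= z.1) = true. Proof. by case: Sz => ->. Qed.
Let z2_ge0 : (0 <= z.2) = true. Proof. by case: Sz => _ [->]. Qed.
Let z12_le : (z.1 + z.2 <= d) = true. Proof. by case: Sz => _ [_ ->]. Qed.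

Ltac by_cuts := apply/asboolP/idP;
  case: (below1 beta z); case: (below2 beta z); case: (above12 beta z); intuition.

Lemma E0E : `[< E0 beta z >] = below1 beta z && below2 beta z.
Proof. rewrite /E0 /= z1_ge0 z2_ge0 lt1E lt2E; by_cuts. Qed.
Lemma E1E : `[< E1 beta z >] = below2 beta z && above12 beta z.
Proof. rewrite /E1 /= z2_ge0 lt2E gt12E z12_le; by_cuts. Qed.
Lemma E2E : `[< E2 beta z >] = below1 beta z && above12 beta z.
Proof. rewrite /E2 /= z1_ge0 lt1E gt12E z12_le; by_cuts. Qed.
Lemma C01E : `[< C01 beta z >] = [&& ~~ below1 beta z, below2 beta z & ~~ above12 beta z].
Proof. rewrite /C01 /= z2_ge0 ge1E lt2E le12E; by_cuts. Qed.
Lemma C12E : `[< C12 beta z >] = [&& ~~ below1 beta z, ~~ below2 beta z & above12 beta z].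
Proof. rewrite /C12 /= ge1E ge2E gt12E z12_le; by_cuts. Qed.
Lemma C02E : `[< C02 beta z >] = [&& below1 beta z, ~~ below2 beta z & ~~ above12 beta z].
Proof. rewrite /C02 /= z1_ge0 lt1E ge2E le12E; by_cuts. Qed.
Lemma C012E : `[< C012 beta z >] = [&& ~~ below1 beta z, ~~ below2 beta z & ~~ above12 beta z].
Proof. rewrite /C012 /= ge1E ge2E le12E; by_cuts. Qed.

End RegionsAsCuts.

Lemma admissible_of_Tmap i z : Sbeta beta (Tmap beta i z) -> admissible beta i z.
Proof.
rewrite /Sbeta /Tmap /admissible /above12 /below1 /below2 /=.
by case: (ord3P i) => -> /=; rewrite /qv /= => -[? [? ?]]; rewrite ?andbT -?leNgt; lra.
Qed.

Section StepOnSbeta.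
Context {z : R * R} (Sz : Sbeta beta z).

Lemma inCE : inC beta z = [|| [&& ~~ below1 beta z, below2 beta z & ~~ above12 beta z],
  [&& ~~ below1 beta z, ~~ below2 beta z & above12 beta z] |
  [&& below1 beta z, ~~ below2 beta z & ~~ above12 beta z]].
Proof. by rewrite /inC /Cset /setU /= !asbool_or C01E // C12E // C02E // -orbA. Qed.

Ltac by_step := rewrite /Kstep /= ?E0E ?E1E ?E2E ?C01E ?C12E ?C02E ?C012E // ?inCE
  /inC012 /upper_digit /lower_digit /admissible ?C012E ?C01E ?C12E //;
  have := not_all_cuts z;
  case: (below1 beta z); case: (below2 beta z); case: (above12 beta z) => //= _.

Lemma Kstep_state w u : (Kstep beta (w, u, z)).2 =
  (if inC beta z then shiftO w else w, if inC012 beta z then shiftU u else u,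
   Tmap beta (Kstep beta (w, u, z)).1 z).
Proof. by by_step; case: (w 0%N). Qed.

Lemma Kstep_digit_C w u :
  inC beta z ->
  (Kstep beta (w, u, z)).1 = if w 0%N then upper_digit beta z else lower_digit beta z.
Proof. by by_step; case: (w 0%N). Qed.

Lemma Kstep_digit_C012 w u : inC012 beta z -> (Kstep beta (w, u, z)).1 = u 0%N.
Proof. by by_step. Qed.

Lemma Kstep_digit_admissible w u : admissible beta (Kstep beta (w, u, z)).1 z.
Proof. by_step; try case: (w 0%N) => //; by case: (ord3P (u 0%N)) => ->. Qed.

Lemma Kstep_digit_eq w u i : admissible beta i z ->
  (inC beta z -> w 0%N = (i == upper_digit beta z)) -> (inC012 beta z -> u 0%N = i) ->
  (Kstep beta (w, u, z)).1 = i.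
Proof. by case: (ord3P i) => ->; by_step => // _ wi ui; rewrite ?wi ?ui. Qed.

Lemma upper_neq_lower : inC beta z -> upper_digit beta z != lower_digit beta z.
Proof. by by_step. Qed.

Lemma Tmap_Sbeta i : admissible beta i z -> Sbeta beta (Tmap beta i z).
Proof.
case/SbetaE: Sz => z1 z2 z12; rewrite /admissible /Tmap /Sbeta /above12 /below1 /below2 /=.
by case: (ord3P i) => -> /=; rewrite /qv /= ?andbT -?leNgt => ?; split; try split; lra.
Qed.

End StepOnSbeta.
End Regions.

(** * Orbits and the inverse of phi *)

Definition coord1 {R : realType} (b : Upsilon) (n : nat) : R := (qv R (b n)).1.
Definition coord2 {R : realType} (b : Upsilon) (n : nat) : R := (qv R (b n)).2.

Lemma coord1_01 {R : realType} b n : 0 <= (coord1 b n : R) <= 1.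
Proof. by rewrite /coord1 /qv; case: (ord3P (b n)) => -> /=; rewrite ?lexx ?ler01. Qed.
Lemma coord2_01 {R : realType} b n : 0 <= (coord2 b n : R) <= 1.
Proof. by rewrite /coord2 /qv; case: (ord3P (b n)) => -> /=; rewrite ?lexx ?ler01. Qed.
Lemma coord12_01 {R : realType} b n : 0 <= coord1 b n + (coord2 b n : R) <= 1.
Proof.
by rewrite /coord1 /coord2 /qv; case: (ord3P (b n)) => -> /=; rewrite ?addr0 ?add0r ?lexx ?ler01.
Qed.

Definition proj_partial {R : realType} (beta : R) (b : Upsilon) (j m : nat) : R * R :=
  (radix beta (coord1 b) j m, radix beta (coord2 b) j m).

Section ProjSeq.
Context {R : realType} {beta : R} (beta_gt1 : 1 < beta).

Lemma proj_seqE b j :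
  proj_seq beta b j = (limn (radix beta (coord1 b) j), limn (radix beta (coord2 b) j)).
Proof. by []. Qed.

Lemma Tmap_proj_seq b j : Tmap beta (b j) (proj_seq beta b j) = proj_seq beta b j.+1.
Proof.
rewrite !proj_seqE /Tmap /=; congr (_, _).
- exact: (lim_radixS beta_gt1 (coord1_01 b) j).
- exact: (lim_radixS beta_gt1 (coord2_01 b) j).
Qed.

Lemma proj_seq_Sbeta b j : Sbeta beta (proj_seq beta b j).
Proof.
rewrite proj_seqE; split; [|split] => /=.
- exact: (lim_radix_ge0 beta_gt1 (coord1_01 b)).
- exact: (lim_radix_ge0 beta_gt1 (coord2_01 b)).
rewrite (lim_radixD beta_gt1 (coord1_01 b) (coord2_01 b)).
exact: (lim_radix_le beta_gt1 (coord12_01 b)).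
Qed.

Lemma proj_seq_unique b (y : nat -> R * R) : (forall n, Sbeta beta (y n)) ->
  (forall n, Tmap beta (b n) (y n) = y n.+1) -> forall j, y j = proj_seq beta b j.
Proof.
move=> Sy yb j; rewrite proj_seqE; apply: injective_projections => /=; apply/esym.
- apply: (lim_radix_orbit beta_gt1 (fun n => (y n).1)); first by move=> n; rewrite -(yb n).
  by move=> n; have [? [? ?]] := Sy n; apply/andP; split => //; lra.
- apply: (lim_radix_orbit beta_gt1 (fun n => (y n).2)); first by move=> n; rewrite -(yb n).
  by move=> n; have [? [? ?]] := Sy n; apply/andP; split => //; lra.
Qed.

Lemma proj_partial_unif j e : 0 < e -> exists N, forall n b, (N <= n)%N ->
  ball (proj_seq beta b j) e (proj_partial beta b j n).
Proof.
move=> e0; have [N Ne] := expN_small beta_gt1 e0; exists N => n b leNn.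
have tail a : (forall n, 0 <= a n <= 1) -> ball (limn (radix beta a j)) e (radix beta a j n).
  move=> a01; rewrite -ball_normE /= ger0_norm;
    last by case/andP: (lim_radix_tail beta_gt1 a01 j n).
  by apply: le_lt_trans (Ne _ leNn); case/andP: (lim_radix_tail beta_gt1 a01 j n).
by split; apply: tail; [exact: coord1_01|exact: coord2_01].
Qed.

End ProjSeq.

Lemma proj_partial_dep {R : realType} (beta : R) {b b' j n} :
  (forall i, (i < j + n)%N -> b i = b' i) -> proj_partial beta b j n = proj_partial beta b' j n.
Proof.
move=> bb'; rewrite /proj_partial /radix /series /=.
by congr (_, _); apply: eq_big_nat => i /andP [_ ltin]; rewrite /coord1 /coord2 bb' // ltn_add2l.
Qed.

Lemma KiterS {R : realType} (beta : R) n (x : state R) :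
  Kiter beta n.+1 x = Kbeta beta (Kiter beta n x).
Proof. by []. Qed.

Section Orbits.
Context {R : realType} {beta : R} (beta_range : 1 < beta <= 3 / 2).

Let beta_gt1 : 1 < beta. Proof. by case/andP: beta_range. Qed.

Lemma Kbeta_Sbeta {x : state R} : Sbeta beta x.2 ->
  Sbeta beta (Kbeta beta x).2 /\ (Kbeta beta x).2 = Tmap beta (Kstep beta x).1 x.2.
Proof.
case: x => -[w u] z /= Sz; rewrite /Kbeta (Kstep_state beta_range Sz) /=; split => //.
exact/(Tmap_Sbeta beta_range Sz)/Kstep_digit_admissible.
Qed.

Lemma Kiter_Sbeta {x : state R} n : Sbeta beta x.2 -> Sbeta beta (Kiter beta n x).2.
Proof. by move=> Sx; elim: n => [//|n IH]; rewrite KiterS; exact: (Kbeta_Sbeta IH).1. Qed.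

Lemma Kiter_proj_seq {x : state R} : Sbeta beta x.2 ->
  forall j, (Kiter beta j x).2 = proj_seq beta (phi beta x) j.
Proof.
move=> Sx; apply: (proj_seq_unique beta_gt1) => n; first exact: Kiter_Sbeta.
by rewrite KiterS (Kbeta_Sbeta (Kiter_Sbeta n Sx)).2.
Qed.

Lemma Kiter_words {x : state R} : Sbeta beta x.2 -> forall j,
  (Kiter beta j x).1.1 =
    (fun n => x.1.1 (n + visits (fun i => inC beta (Kiter beta i x).2) j)%N) /\
  (Kiter beta j x).1.2 =
    (fun n => x.1.2 (n + visits (fun i => inC012 beta (Kiter beta i x).2) j)%N).
Proof.
move=> Sx; elim=> [|j [IHw IHu]]; first by split; apply: funext => n; rewrite addn0.
rewrite KiterS !visitsS.
move: (Kiter_Sbeta j Sx) IHw IHu; case: (Kiter beta j x) => -[w u] z /= Sz -> ->.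
rewrite /Kbeta (Kstep_state beta_range Sz) /=.
by split; apply: funext => n; [case: (inC beta z)|case: (inC012 beta z)];
  rewrite /shiftO /shiftU /= ?addn0 ?addn1 ?addnS ?addSn.
Qed.

End Orbits.

Section Inverse.
Context {R : realType} (beta : R).

Definition inC_at (b : Upsilon) (j : nat) := inC beta (proj_seq beta b j).
Definition inC012_at (b : Upsilon) (j : nat) := inC012 beta (proj_seq beta b j).

Definition omega_of (b : Upsilon) : Omega :=
  letter_at (inC_at b) (fun j => b j == upper_digit beta (proj_seq beta b j)).
Definition upsilon_of (b : Upsilon) : Upsilon := letter_at (inC012_at b) b.

Definition psi (b : Upsilon) : state R := (omega_of b, upsilon_of b, proj_seq beta b 0).

Definition psi_state (b : Upsilon) (j : nat) : state R :=
  (fun n => omega_of b (n + visits (inC_at b) j)%N,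
   fun n => upsilon_of b (n + visits (inC012_at b) j)%N,
   proj_seq beta b j).

End Inverse.

Section InverseCorrect.
Context {R : realType} {beta : R} (beta_range : 1 < beta <= 3 / 2).

Let beta_gt1 : 1 < beta. Proof. by case/andP: beta_range. Qed.

Lemma Kstep_psi_state b j :
  Kstep beta (psi_state beta b j) = (b j, psi_state beta b j.+1).
Proof.
have Sz := proj_seq_Sbeta beta_gt1 b j.
rewrite /psi_state [LHS]surjective_pairing (Kstep_state beta_range Sz).
have -> : (Kstep beta (psi_state beta b j)).1 = b j.
  apply: (Kstep_digit_eq beta_range Sz) => [|Cz|C012z].
  - by apply: admissible_of_Tmap; rewrite Tmap_proj_seq //; exact: proj_seq_Sbeta.
  - exact: letter_at_visits.
  - exact: letter_at_visits.
rewrite (Tmap_proj_seq beta_gt1) !visitsS /inC_at /inC012_at.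
by congr (_, (_, _, _)); apply: funext => n; [case: inC|case: inC012];
  rewrite /shiftO /shiftU /= ?addn0 ?addn1 ?addnS.
Qed.

Lemma Kiter_psi b j : Kiter beta j (psi beta b) = psi_state beta b j.
Proof.
elim: j => [|j IH].
  by rewrite /psi_state; congr (_, _, _); apply: funext => n; rewrite addn0.
by rewrite KiterS IH /Kbeta Kstep_psi_state.
Qed.

Lemma phi_psi b : phi beta (psi beta b) = b.
Proof. by apply: funext => j; rewrite /phi Kiter_psi Kstep_psi_state. Qed.

Lemma psi_Zset b : Dset beta b -> Zset beta (psi beta b).
Proof.
case=> bC bC012; split; first exact: proj_seq_Sbeta.
by split=> N; [have [n ? ?] := bC N|have [n ? ?] := bC012 N]; exists n; rewrite // Kiter_psi.
Qed.

Lemma phi_Dset x : Zset beta x -> Dset beta (phi beta x).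
Proof.
case=> Sx [xC xC012].
by split=> N; [have [n ? ?] := xC N|have [n ? ?] := xC012 N]; exists n; rewrite // -Kiter_proj_seq.
Qed.

Section LettersOfPhi.
Context {x : state R} (Zx : Zset beta x).
Local Notation b := (phi beta x).

Let Sx : Sbeta beta x.2. Proof. by case: Zx. Qed.

Let inC_atE : inC_at beta b = fun i => inC beta (Kiter beta i x).2.
Proof. by apply: funext => i; rewrite /inC_at Kiter_proj_seq. Qed.

Let inC012_atE : inC012_at beta b = fun i => inC012 beta (Kiter beta i x).2.
Proof. by apply: funext => i; rewrite /inC012_at Kiter_proj_seq. Qed.

Lemma omega_of_phi : omega_of beta b = x.1.1.
Proof.
have bC : inf_often (inC_at beta b).
  case: Zx => _ [xC _] N; have [n ? ?] := xC N.
  by exists n; rewrite // inC_atE; exact/asboolP.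
apply: funext => k; have [j Cj <-{k}] := visits_onto _ bC k.
rewrite /omega_of letter_at_visits // -Kiter_proj_seq // /phi.
move: Cj; rewrite inC_atE; have := (Kiter_words beta_range Sx j).1.
have := Kiter_Sbeta beta_range j Sx.
case: (Kiter beta j x) => -[w u] z /= Sz -> Cz.
rewrite (Kstep_digit_C beta_range Sz _ _ Cz) add0n.
case: (x.1.1 _); first exact: eqxx.
by apply/negbTE; rewrite eq_sym; exact: upper_neq_lower.
Qed.

Lemma upsilon_of_phi : upsilon_of beta b = x.1.2.
Proof.
have bC012 : inf_often (inC012_at beta b).
  case: Zx => _ [_ xC012] N; have [n ? ?] := xC012 N.
  by exists n; rewrite // inC012_atE; exact/asboolP.
apply: funext => k; have [j C012j <-{k}] := visits_onto _ bC012 k.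
rewrite /upsilon_of letter_at_visits // /phi.
move: C012j; rewrite inC012_atE; have := (Kiter_words beta_range Sx j).2.
have := Kiter_Sbeta beta_range j Sx.
case: (Kiter beta j x) => -[w u] z /= Sz -> C012z.
by rewrite (Kstep_digit_C012 beta_range Sz _ _ C012z) add0n.
Qed.

End LettersOfPhi.

Lemma psi_phi {x} : Zset beta x -> psi beta (phi beta x) = x.
Proof.
move=> Zx; case: x Zx => -[w u] z Zx.
by rewrite /psi omega_of_phi // upsilon_of_phi // -Kiter_proj_seq //; case: Zx.
Qed.

End InverseCorrect.

(** * Measurability *)

Section BorelPlane.
Context {R : realType}.
Local Notation B2 := (borel2 R).

Lemma continuous_fst : continuous (fun z : R * R => z.1).
Proof. by move=> p; exact: cvg_fst. Qed.

Lemma continuous_snd : continuous (fun z : R * R => z.2).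
Proof. by move=> p; exact: cvg_snd. Qed.

Lemma continuous_sum : continuous (fun z : R * R => z.1 + z.2).
Proof. by move=> p; apply: cvgD; [exact: cvg_fst|exact: cvg_snd]. Qed.

Lemma continuous_Tmap (beta : R) i : continuous (Tmap beta i).
Proof.
move=> p; apply: (@cvg_pair _ _ _ (nbhs p) (nbhs _) (nbhs _)).
- by apply: cvgB; [apply: cvgMl_tmp; exact: cvg_fst|exact: cvg_cst].
- by apply: cvgB; [apply: cvgMl_tmp; exact: cvg_snd|exact: cvg_cst].
Qed.

Lemma borel2_preimage {f : R * R -> R * R} : continuous f ->
  forall C, B2 C -> B2 (f @^-1` C).
Proof.
move=> cf; apply: salg_preimage => U oU.
by apply: sub_sigma_algebra; exact: (open_comp (fun x _ => cf x) oU).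
Qed.

Lemma borel2_lt (g : R * R -> R) c : continuous g -> B2 [set z | g z < c].
Proof.
by move=> cg; apply: sub_sigma_algebra; exact: (open_comp (fun x _ => cg x) (@open_lt R c)).
Qed.

Lemma borel2_gt (g : R * R -> R) c : continuous g -> B2 [set z | c < g z].
Proof.
by move=> cg; apply: sub_sigma_algebra; exact: (open_comp (fun x _ => cg x) (@open_gt R c)).
Qed.

Lemma borel2_le (g : R * R -> R) c : continuous g -> B2 [set z | g z <= c].
Proof.
move=> cg; rewrite (_ : [set z | _] = ~` [set z | c < g z]).
  by apply: salgC; exact: borel2_gt.
by apply/seteqP; split=> z /=; rewrite leNgt => /negP.
Qed.

Lemma borel2_ge (g : R * R -> R) c : continuous g -> B2 [set z | c <= g z].
Proof.
move=> cg; rewrite (_ : [set z | _] = ~` [set z | g z < c]).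
  by apply: salgC; exact: borel2_lt.
by apply/seteqP; split=> z /=; rewrite leNgt => /negP.
Qed.

Lemma borel2_and (u v : R * R -> bool) :
  B2 [set z | u z] -> B2 [set z | v z] -> B2 [set z | u z && v z].
Proof.
move=> Bu Bv; rewrite (_ : [set z | _] = [set z | u z] `&` [set z | v z]); first exact: salgI.
by apply/seteqP; split=> z /=; [move/andP|case=> -> ->].
Qed.

End BorelPlane.

Section BorelRegions.
Context {R : realType} (beta : R).
Local Notation B2 := (borel2 R).

Ltac borel_region := repeat first [ apply: salgI | apply: borel2_and
  | apply: borel2_lt | apply: borel2_gt | apply: borel2_le | apply: borel2_ge
  | exact: continuous_fst | exact: continuous_snd | exact: continuous_sum ].

Lemma borel2_E0 : B2 (E0 beta). Proof. by rewrite /E0; borel_region. Qed.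
Lemma borel2_E1 : B2 (E1 beta). Proof. by rewrite /E1; borel_region. Qed.
Lemma borel2_E2 : B2 (E2 beta). Proof. by rewrite /E2; borel_region. Qed.
Lemma borel2_C01 : B2 (C01 beta). Proof. by rewrite /C01; borel_region. Qed.
Lemma borel2_C12 : B2 (C12 beta). Proof. by rewrite /C12; borel_region. Qed.
Lemma borel2_C02 : B2 (C02 beta). Proof. by rewrite /C02; borel_region. Qed.
Lemma borel2_C012 : B2 (C012 beta). Proof. by rewrite /C012; borel_region. Qed.

Lemma borel2_Cset : B2 (Cset beta).
Proof.
by apply: salgU; [apply: salgU|]; [exact: borel2_C01|exact: borel2_C12|exact: borel2_C02].
Qed.

End BorelRegions.

Lemma seq_sigma_shift (K : Type) (A : set (nat -> K)) :
  seq_sigma K A -> seq_sigma K ((fun w n => w n.+1) @^-1` A).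
Proof. by apply: salg_preimage => _ [n [k ->]]; exact: seq_sigma_cyl. Qed.

Section StateSigma.
Context {R : realType}.
Local Notation SS := (state_sigma R).

Lemma state_sigma_rect {A B C} :
  seq_sigma bool A -> seq_sigma 'I_3 B -> borel2 R C -> SS (A `*` B `*` C).
Proof. by move=> SA SB SC; apply: sub_sigma_algebra; exists A, B, C. Qed.

Lemma state_sigma_preimage {a : Omega -> Omega} {a' : Upsilon -> Upsilon} {c : R * R -> R * R} :
  (forall A, seq_sigma bool A -> seq_sigma bool (a @^-1` A)) ->
  (forall B, seq_sigma 'I_3 B -> seq_sigma 'I_3 (a' @^-1` B)) ->
  (forall C, borel2 R C -> borel2 R (c @^-1` C)) ->
  forall S, SS S -> SS ((fun x : state R => (a x.1.1, a' x.1.2, c x.2)) @^-1` S).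
Proof.
move=> ma ma' mc; apply: salg_preimage => _ [A [B [C [SA SB SC ->]]]].
exact (state_sigma_rect (ma _ SA) (ma' _ SB) (mc _ SC)).
Qed.

Lemma state_sigma_space (C : set (R * R)) : borel2 R C -> SS [set x | `[< C x.2 >]].
Proof.
move=> BC; rewrite (_ : [set x | _] = setT `*` setT `*` C).
  by apply: state_sigma_rect => //; exact: salgT.
by apply/seteqP; split=> x /=; [move/asboolP|case=> _ /asboolP].
Qed.

Lemma state_sigma_omega0 : SS [set x : state R | x.1.1 0%N].
Proof.
rewrite (_ : [set x | _] = [set w | w 0%N = true] `*` setT `*` setT).
  by apply: state_sigma_rect; [exact: seq_sigma_cyl|exact: salgT|exact: salgT].
by apply/seteqP; split=> x /=; [|case=> -[]].
Qed.

Lemma state_sigma_upsilon0 k : SS [set x : state R | x.1.2 0%N == k].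
Proof.
have -> : [set x : state R | x.1.2 0%N == k] = setT `*` [set u | u 0%N = k] `*` setT.
  by apply/seteqP; split=> x /=; [move/eqP|case=> -[_ /eqP]].
by apply: state_sigma_rect; [exact: salgT|exact: seq_sigma_cyl|exact: salgT].
Qed.

End StateSigma.

Section MeasurableStep.
Context {R : realType}.
Local Notation SS := (state_sigma R).

Definition measurable_step (F : state R -> 'I_3 * state R) :=
  (forall k, SS [set x | (F x).1 = k]) /\ (forall S, SS S -> SS [set x | S (F x).2]).

Lemma measurable_step_if (c : state R -> bool) F G : SS [set x | c x] ->
  measurable_step F -> measurable_step G -> measurable_step (fun x => if c x then F x else G x).
Proof.
move=> Sc [F1 F2] [G1 G2]; split=> [k|S SS_S].
- rewrite (_ : [set x | _] = [set x | if c x then (F x).1 = k else (G x).1 = k]).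
    by apply: salg_if; [exact: Sc|exact: F1|exact: G1].
  by apply/seteqP; split=> x /=; case: (c x).
- rewrite (_ : [set x | _] = [set x | if c x then S (F x).2 else S (G x).2]).
    by apply: salg_if; [exact: Sc|exact: F2|exact: G2].
  by apply/seteqP; split=> x /=; case: (c x).
Qed.

Lemma measurable_step_leaf (k : 'I_3) {a : Omega -> Omega} {a' : Upsilon -> Upsilon}
    {c : R * R -> R * R} :
  (forall A, seq_sigma bool A -> seq_sigma bool (a @^-1` A)) ->
  (forall B, seq_sigma 'I_3 B -> seq_sigma 'I_3 (a' @^-1` B)) -> continuous c ->
  measurable_step (fun x => (k, (a x.1.1, a' x.1.2, c x.2))).
Proof.
move=> ma ma' cc; split=> [k'|S SS_S]; first exact: (salg_cst _ (k = k')).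
exact (state_sigma_preimage ma ma' (borel2_preimage cc) S SS_S).
Qed.

End MeasurableStep.

Section KstepMeasurable.
Context {R : realType} (beta : R).

(* [Kstep] with the match on the state replaced by projections and the digit
   [u 0] of the [C012] branch split into its three values, so that it is a
   nested case split whose leaves are measurable. *)
Definition Kstep_flat (x : state R) : 'I_3 * state R :=
  let: w := x.1.1 in let: u := x.1.2 in let: z := x.2 in
  if `[< E0 beta z >] then (i0, (w, u, Tmap beta i0 z))
  else if `[< E1 beta z >] then (i1, (w, u, Tmap beta i1 z))
  else if `[< E2 beta z >] then (i2, (w, u, Tmap beta i2 z))
  else if `[< C01 beta z >] then
    (if w 0%N then (i1, (shiftO w, u, Tmap beta i1 z)) else (i0, (shiftO w, u, Tmap beta i0 z)))
  else if `[< C12 beta z >] then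
    (if w 0%N then (i2, (shiftO w, u, Tmap beta i2 z)) else (i1, (shiftO w, u, Tmap beta i1 z)))
  else if `[< C02 beta z >] then
    (if w 0%N then (i2, (shiftO w, u, Tmap beta i2 z)) else (i0, (shiftO w, u, Tmap beta i0 z)))
  else if `[< C012 beta z >] then
    (if u 0%N == i0 then (i0, (w, shiftU u, Tmap beta i0 z))
     else if u 0%N == i1 then (i1, (w, shiftU u, Tmap beta i1 z))
     else (i2, (w, shiftU u, Tmap beta i2 z)))
  else (i0, (w, u, z)).

Lemma Kstep_flatE : Kstep beta = Kstep_flat.
Proof.
apply: funext => -[[w u] z]; rewrite /Kstep /Kstep_flat /=.
by case: (w 0%N); case: (ord3P (u 0%N)) => ->.
Qed.

Lemma Kstep_measurable : measurable_step (Kstep beta).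
Proof.
rewrite Kstep_flatE /Kstep_flat.
repeat (apply: measurable_step_if; first (exact: state_sigma_omega0
  || exact: state_sigma_upsilon0 || (apply: state_sigma_space; first
  [exact: borel2_E0|exact: borel2_E1|exact: borel2_E2|exact: borel2_C01
  |exact: borel2_C12|exact: borel2_C02|exact: borel2_C012]))).
all: first [ apply: (@measurable_step_leaf _ _ id id id)
  | apply: (@measurable_step_leaf _ _ id id) | apply: (@measurable_step_leaf _ _ shiftO id)
  | apply: (@measurable_step_leaf _ _ id shiftU) ].
all: first [by move=> ? | exact: seq_sigma_shift | exact: continuous_Tmap | exact: cvg_id].
Qed.

Lemma Kiter_measurable n S : state_sigma R S -> state_sigma R (Kiter beta n @^-1` S).
Proof.
elim: n S => [//|n IH] S SS_S.
rewrite (_ : _ @^-1` S = Kiter beta n @^-1` [set x | S (Kstep beta x).2]) //.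
by apply: IH; exact: Kstep_measurable.2.
Qed.

Lemma phi_measurable B : seq_sigma 'I_3 B -> state_sigma R (phi beta @^-1` B).
Proof.
apply: salg_preimage => _ [n [k ->]].
rewrite (_ : _ @^-1` _ = Kiter beta n @^-1` [set x | (Kstep beta x).1 = k]) //.
by apply: Kiter_measurable; exact: Kstep_measurable.1.
Qed.

End KstepMeasurable.

Section PsiMeasurable.
Context {R : realType} {beta : R} (beta_gt1 : 1 < beta).
Local Notation U := (seq_sigma 'I_3).

Lemma proj_seq_measurable j {C} : borel2 R C -> U [set b | C (proj_seq beta b j)].
Proof.
move: C; apply: salg_preimage => V oV.
rewrite (preimage_open_unif_limit oV (proj_partial_unif beta_gt1 j)).
apply: salg_bigcup => m; apply: salg_bigcup => N; apply: salg_bigcap => n.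
by apply: (seq_sigma_finite_dep (j + (N + n))) => b b' bb'; rewrite /= (proj_partial_dep beta bb').
Qed.

Lemma proj_seq_measurable_asbool j {C} : borel2 R C -> U [set b | `[< C (proj_seq beta b j) >]].
Proof.
move=> BC; rewrite (_ : [set b | _] = [set b | C (proj_seq beta b j)]).
  exact: proj_seq_measurable.
by apply/seteqP; split=> b /asboolP.
Qed.

Lemma omega_of_measurable A : seq_sigma bool A -> U (omega_of beta @^-1` A).
Proof.
apply: salg_preimage => _ [k [t ->]]; apply: salg_letter_at => [j|j].
  exact (proj_seq_measurable_asbool j (borel2_Cset beta)).
rewrite (_ : [set b | _] = [set b | if `[< C01 beta (proj_seq beta b j) >]
    then (b j == i1) = t else (b j == i2) = t]); last first.
  by apply/seteqP; split=> b /=; rewrite /upper_digit; case: ifP.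
apply: salg_if; first exact: (proj_seq_measurable_asbool j (borel2_C01 beta)).
all: by apply: (seq_sigma_finite_dep j.+1) => b b' bb'; rewrite /= bb'.
Qed.

Lemma upsilon_of_measurable B : U B -> U (upsilon_of beta @^-1` B).
Proof.
apply: salg_preimage => _ [k [a ->]]; apply: salg_letter_at => j; last exact: seq_sigma_cyl.
exact (proj_seq_measurable_asbool j (borel2_C012 beta)).
Qed.

Lemma psi_measurable S : state_sigma R S -> U (psi beta @^-1` S).
Proof.
apply: salg_preimage => _ [A [B [C [SA SB BC ->]]]].
apply: salgI; [apply: salgI|].
- exact: omega_of_measurable.
- exact: upsilon_of_measurable.
- exact: proj_seq_measurable.
Qed.

End PsiMeasurable.

Theorem lemma4p4 (R : realType) (beta : R) :
  1 < beta <= 3 / 2 ->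
  (* phi' = phi|_Z maps Z into D, bijectively *)
  (forall x, Zset beta x -> Dset beta (phi beta x)) /\
  (forall x y, Zset beta x -> Zset beta y -> phi beta x = phi beta y -> x = y) /\
  (forall b, Dset beta b -> exists2 x, Zset beta x & phi beta x = b) /\
  (* phi' is measurable *)
  trace_measurable (state_sigma R) (seq_sigma 'I_3) (Zset beta) (phi beta) /\
  (* its inverse D -> Z is measurable *)
  (exists psi : Upsilon -> state R,
     (forall b, Dset beta b -> Zset beta (psi b) /\ phi beta (psi b) = b) /\
     trace_measurable (seq_sigma 'I_3) (state_sigma R) (Dset beta) psi).
Proof.
move=> beta_range; have beta_gt1 : 1 < beta by case/andP: beta_range.
split; [|split; [|split; [|split]]].
- exact: phi_Dset.
- by move=> x y Zx Zy exy; rewrite -(psi_phi beta_range Zx) -(psi_phi beta_range Zy) exy.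
- by move=> b Db; exists (psi beta b); [exact: psi_Zset|exact: phi_psi].
- by move=> B SB; exists (phi beta @^-1` B) => //; exact: phi_measurable.
- exists (psi beta); split; first by move=> b Db; split; [exact: psi_Zset|exact: phi_psi].
  by move=> S SS; exists (psi beta @^-1` S) => //; exact: psi_measurable.
Qed.
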